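(* Let $\mathcal{N}\in\mathbb{C}^{n\times n}$ be Hermitian positive definite. Then $\Pi(P_\sharp,R_\sharp)=P_\sharp(R_\sharp^*AP_\sharp)^{-1}R_\sharp^*A$ is $\mathcal{N}$-orthogonal if and only if $V_r^*\mathcal{N}V_r$ is CF-block diagonal.
   Context: Let $A,M\in\mathbb{C}^{n\times n}$ be nonsingular with $M^{-1}A$ and $M^{-*}A^*$ diagonalizable. Let $V_r=[\bm v_{r,1},\dots,\bm v_{r,n}]$ and $V_l=[\bm v_{l,1},\dots,\bm v_{l,n}]$ be invertible matrices of right and left generalized eigenvectors of the pencil $(A,M)$, i.e. $AV_r=MV_r\Lambda$ and $V_l^*A=\Lambda V_l^*M$ with $\Lambda=\mathrm{diag}(\lambda_1,\dots,\lambda_n)$, chosen so that $V_l^*AV_r=D_a$ and $V_l^*MV_r=D_m$ are diagonal, and with the eigenvalues ordered so that $|1-\lambda_1|\ge\cdots\ge|1-\lambda_n|\ge0$. Fix $n_c\in\{1,\dots,n\}$, $n_f=n-n_c$. A matrix is CF-block diagonal if it is block diagonal with respect to the partition of indices into $\{1,\dots,n_c\}$ and $\{n_c+1,\dots,n\}$. $P_\sharp,R_\sharp\in\mathbb{C}^{n\times n_c}$ are any matrices with $\mathrm{range}(P_\sharp)=\mathrm{span}\{\bm v_{r,1},\dots,\bm v_{r,n_c}\}$ and $\mathrm{range}(R_\sharp)=\mathrm{span}\{\bm v_{l,1},\dots,\bm v_{l,n_c}\}$. For Hermitian positive definite $\mathcal{N}$, $\langle x,y\rangle_{\mathcal N}=y^*\mathcal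 N x$; a matrix $Z$ is $\mathcal N$-orthogonal if $\langle Zx,y\rangle_{\mathcal N}=\langle x,Zy\rangle_{\mathcal N}$ for all $x,y$. *)

From HB Require Import structures.
From mathcomp Require Import all_boot all_order all_algebra.
Set Implicit Arguments. Unset Strict Implicit. Unset Printing Implicit Defensive.
Import Order.TTheory GRing.Theory Num.Theory.
Local Open Scope ring_scope.

Definition ctr (C : numClosedFieldType) m n (X : 'M[C]_(m, n)) : 'M[C]_(n, m) :=
  (map_mx Num.conj X)^T.

Definition hpd (C : numClosedFieldType) n (N : 'M[C]_n) : Prop :=
  ctr N = N /\ forall x : 'cV[C]_n, x != 0 -> 0 < (ctr x *m N *m x) 0 0.

Definition ipN (C : numClosedFieldType) n (N : 'M[C]_n) (x y : 'cV[C]_n) : C :=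
  (ctr y *m N *m x) 0 0.

Definition N_orthogonal (C : numClosedFieldType) n (N Z : 'M[C]_n) : Prop :=
  forall x y : 'cV[C]_n, ipN N (Z *m x) y = ipN N x (Z *m y).

Definition CF_block_diag (C : numClosedFieldType) nc nf (B : 'M[C]_(nc + nf)) : Prop :=
  ursubmx B = 0 /\ dlsubmx B = 0.

Definition Pi (C : numClosedFieldType) n k (A : 'M[C]_n) (P R : 'M[C]_(n, k)) : 'M[C]_n :=
  P *m invmx (ctr R *m A *m P) *m ctr R *m A.

From HB Require Import structures.
From mathcomp Require Import all_boot all_order all_algebra.
Import Order.TTheory GRing.Theory Num.Theory.
Set Implicit Arguments. Unset Strict Implicit. Unset Printing Implicit Defensive.
Local Open Scope ring_scope.

(* In the eigenbasis [Vr] the projector [Pi] acts as [pid_mx nc] (the block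
   diagonality of [Vl^* A Vr] makes [R^* A P] the leading block of it, and
   [Pi] does not depend on the chosen bases of the column spaces of [P], [R]).
   [N]-orthogonality is invariant under this change of basis, with [N] replaced
   by the Gram matrix [G = Vr^* N Vr], and [pid_mx nc] is [G]-orthogonal iff it
   commutes with [G], i.e. iff the off-diagonal blocks of [G] vanish. *)

Lemma invmxM (R : comUnitRingType) n (A B : 'M[R]_n) :
  A \in unitmx -> B \in unitmx -> invmx (A *m B) = invmx B *m invmx A.
Proof.
move=> uA uB; have uAB : A *m B \in unitmx by rewrite unitmx_mul uA uB.
rewrite -[RHS](mulmxK uAB) !mulmxA -[_ *m invmx A *m A]mulmxA mulVmx //.
by rewrite mulmx1 mulVmx // mul1mx.
Qed.

Lemma eqmx_tr_unitmx (F : fieldType) m n (P Q : 'M[F]_(m, n)) :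
  (P^T == Q^T)%MS -> exists2 X, X \in unitmx & P = Q *m X.
Proof.
case/eqmxMunitP=> U uU PQ; exists U^T; first by rewrite unitmx_tr.
by rewrite -[P]trmxK PQ trmx_mul trmxK.
Qed.

Section ConjugateTranspose.
Variable C : numClosedFieldType.

Lemma ctr_mul m n p (A : 'M[C]_(m, n)) (B : 'M[C]_(n, p)) :
  ctr (A *m B) = ctr B *m ctr A.
Proof. by rewrite /ctr map_mxM trmx_mul. Qed.

Lemma ctr_pid_mx m n r : ctr (pid_mx r : 'M[C]_(m, n)) = pid_mx r.
Proof. by rewrite /ctr map_pid_mx tr_pid_mx. Qed.

Lemma ctr_lsubmx m n1 n2 (A : 'M[C]_(m, n1 + n2)) :
  ctr (lsubmx A) = usubmx (ctr A).
Proof. by rewrite /ctr map_lsubmx trmx_lsub. Qed.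

Lemma unitmx_ctr n (A : 'M[C]_n) : (ctr A \in unitmx) = (A \in unitmx).
Proof. by rewrite /ctr unitmx_tr map_unitmx. Qed.

End ConjugateTranspose.

Section OrthogonalityForms.
Variables (C : numClosedFieldType) (n : nat).
Implicit Types N Z V E : 'M[C]_n.

Lemma ipN_mulmx N V x y : ipN N (V *m x) (V *m y) = ipN (ctr V *m N *m V) x y.
Proof. by rewrite /ipN ctr_mul !mulmxA. Qed.

Lemma eq_ipN (K1 K2 : 'M[C]_n) : (forall x y, ipN K1 x y = ipN K2 x y) -> K1 = K2.
Proof.
move=> eqK; apply/matrixP=> i j.
have ctr_delta : ctr (delta_mx i 0 : 'cV[C]_n) = delta_mx 0 i.
  by apply/matrixP=> a b; rewrite !mxE conjC_nat andbC.
by have := eqK (delta_mx j 0) (delta_mx i 0); rewrite /ipN ctr_delta -!rowE -!colE !mxE.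
Qed.

Lemma N_orthogonalP N Z : N_orthogonal N Z <-> N *m Z = ctr Z *m N.
Proof.
have ipNl x y : ipN N (Z *m x) y = ipN (N *m Z) x y by rewrite /ipN !mulmxA.
have ipNr x y : ipN N x (Z *m y) = ipN (ctr Z *m N) x y.
  by rewrite /ipN ctr_mul !mulmxA.
split=> [orthZ | NZ x y]; last by rewrite ipNl ipNr NZ.
by apply: eq_ipN => x y; rewrite -ipNl -ipNr.
Qed.

Lemma N_orthogonal_similar N Z V E : V \in unitmx -> Z *m V = V *m E ->
  N_orthogonal N Z <-> N_orthogonal (ctr V *m N *m V) E.
Proof.
move=> uV ZV; have ZVx x : Z *m (V *m x) = V *m (E *m x) by rewrite !mulmxA ZV.
split=> orthZ x y; first by rewrite -!ipN_mulmx -!ZVx.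
by rewrite -[x](mulKVmx uV) -[y](mulKVmx uV) !ZVx !ipN_mulmx.
Qed.

End OrthogonalityForms.

Section BlockDiagonal.
Variables (C : numClosedFieldType) (nc nf : nat).
Implicit Types B D : 'M[C]_(nc + nf).

Lemma is_diag_mx_CF_block_diag D : is_diag_mx D -> CF_block_diag D.
Proof.
move=> /is_diag_mxP diagD; split; apply/matrixP=> i j; rewrite !mxE diagD //=.
  by rewrite neq_ltn (leq_trans (ltn_ord i)) ?leq_addr.
by rewrite neq_ltn (leq_trans (ltn_ord j)) ?leq_addr ?orbT.
Qed.

Lemma unitmx_CF_block_diag_ul D :
  CF_block_diag D -> D \in unitmx -> ulsubmx D \in unitmx.
Proof.
case=> Dur Ddl; rewrite -[D]submxK Dur Ddl block_mxKul !unitmxE det_ublock.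
by rewrite unitrM => /andP[].
Qed.

Lemma lsubmx_pid_mx m (V : 'M[C]_(m, nc + nf)) : lsubmx V = V *m pid_mx nc.
Proof. by rewrite pid_mx_col -{2}[V]hsubmxK mul_row_col mulmx1 mulmx0 addr0. Qed.

Lemma pid_mx_commute_CF_block_diag B :
  B *m pid_mx nc = pid_mx nc *m B <-> CF_block_diag B.
Proof.
rewrite pid_mx_block -[B]submxK !mulmx_block !mulmx1 !mul1mx !mulmx0 !mul0mx !addr0.
rewrite /CF_block_diag !block_mxKur !block_mxKdl.
split=> [/eq_block_mx[_ <- -> _] | [-> ->]] //.
Qed.

Lemma N_orthogonal_pid_mx B : N_orthogonal B (pid_mx nc) <-> CF_block_diag B.
Proof.
apply: iff_trans (N_orthogonalP _ _) _; rewrite ctr_pid_mx.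
exact: pid_mx_commute_CF_block_diag.
Qed.

End BlockDiagonal.

Section TwoLevelProjector.
Variable C : numClosedFieldType.

Lemma Pi_mulmx_unit n k (A : 'M[C]_n) (P R : 'M[C]_(n, k)) (X Y : 'M[C]_k) :
  X \in unitmx -> Y \in unitmx -> ctr R *m A *m P \in unitmx ->
  Pi A (P *m X) (R *m Y) = Pi A P R.
Proof.
move=> uX uY uRAP; rewrite /Pi ctr_mul.
have -> : ctr Y *m ctr R *m A *m (P *m X) = ctr Y *m (ctr R *m A *m P) *m X.
  by rewrite !mulmxA.
rewrite !invmxM ?unitmx_mul ?unitmx_ctr ?uY ?uRAP // !mulmxA.
by rewrite -[P *m X *m invmx X]mulmxA mulmxV // mulmx1 mulmxKV ?unitmx_ctr.
Qed.

Variables (nc nf : nat) (A Vr Vl : 'M[C]_(nc + nf)).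

Lemma ctr_lsubmx_mulmx :
  ctr (lsubmx Vl) *m A *m lsubmx Vr = ulsubmx (ctr Vl *m A *m Vr).
Proof. by rewrite ctr_lsubmx mul_usub_mx mulmx_lsub mul_usub_mx. Qed.

Lemma Pi_eigenbasis :
  CF_block_diag (ctr Vl *m A *m Vr) -> ctr Vl *m A *m Vr \in unitmx ->
  Pi A (lsubmx Vr) (lsubmx Vl) *m Vr = Vr *m pid_mx nc.
Proof.
set D := ctr Vl *m A *m Vr; move=> blockD uD.
have uD1 : ulsubmx D \in unitmx by exact: unitmx_CF_block_diag_ul.
have usubD : ctr (lsubmx Vl) *m (A *m Vr) = row_mx (ulsubmx D) 0.
  by rewrite ctr_lsubmx mulmxA !mul_usub_mx -blockD.1 hsubmxK.
rewrite /Pi ctr_lsubmx_mulmx -/D -!mulmxA usubD mul_mx_row mulVmx // mulmx0.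
by rewrite -pid_mx_row lsubmx_pid_mx -mulmxA mul_pid_mx !minnn.
Qed.

End TwoLevelProjector.

Theorem lemma3p2 (C : numClosedFieldType) (nc nf : nat) (Hnc : (0 < nc)%N)
  (A M Vr Vl : 'M[C]_(nc + nf)) (lam : 'I_(nc + nf) -> C)
  (HA : A \in unitmx) (HM : M \in unitmx)
  (HdiagA : diagonalizable (invmx M *m A))
  (HdiagAs : diagonalizable (invmx (ctr M) *m ctr A))
  (HVr : Vr \in unitmx) (HVl : Vl \in unitmx)
  (Hr : A *m Vr = M *m Vr *m diag_mx (\row_i lam i))
  (Hl : ctr Vl *m A = diag_mx (\row_i lam i) *m ctr Vl *m M)
  (HDa : is_diag_mx (ctr Vl *m A *m Vr))
  (HDm : is_diag_mx (ctr Vl *m M *m Vr))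
  (Hord : forall i j : 'I_(nc + nf), (i <= j)%N -> `|1 - lam j| <= `|1 - lam i|)
  (P R : 'M[C]_(nc + nf, nc))
  (HP : ((P^T) == (lsubmx Vr)^T)%MS)
  (HR : ((R^T) == (lsubmx Vl)^T)%MS)
  (N : 'M[C]_(nc + nf)) (HN : hpd N) :
  N_orthogonal N (Pi A P R) <-> CF_block_diag (ctr Vr *m N *m Vr).
Proof.
have [X uX ->] := eqmx_tr_unitmx HP.
have [Y uY ->] := eqmx_tr_unitmx HR.
have blockD := is_diag_mx_CF_block_diag HDa.
have uD : ctr Vl *m A *m Vr \in unitmx by rewrite !unitmx_mul unitmx_ctr HVl HA HVr.
have uD1 : ctr (lsubmx Vl) *m A *m lsubmx Vr \in unitmx.
  by rewrite ctr_lsubmx_mulmx unitmx_CF_block_diag_ul.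
rewrite Pi_mulmx_unit //.
apply: iff_trans (N_orthogonal_similar _ HVr (Pi_eigenbasis blockD uD)) _.
exact: N_orthogonal_pid_mx.
Qed.
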